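(* Let $(A,B,\mathfrak H)$ be a P-module. Then either every non-zero vector of $\mathfrak H$ is annihilated by all rays, or there exists a vector of $\mathfrak H$ contained in some periodic ray $p$.
   Context: A P-module is $(A,B,\mathfrak H)$ with $\mathfrak H$ a finite-dimensional complex Hilbert space and $A,B$ operators with $A^*A+B^*B=\mathrm{id}$. A ray is an infinite binary sequence $p=x_1x_2\cdots$; $p_n=x_1\cdots x_n$. For a finite binary word $w=x_1\cdots x_n$, $w\xi:=X_{x_n}\cdots X_{x_1}\xi$ where $X_0=A$, $X_1=B$. A non-zero vector $\xi$ is contained in the ray $p$ if $\|p_n\xi\|=\|\xi\|$ for all $n$; it is annihilated by all rays if $\lim_n\|q_n\xi\|=0$ for every ray $q$. A ray is periodic if it equals $w^\infty$ for some finite non-empty word $w$. *)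

From HB Require Import structures.
From mathcomp Require Import all_boot all_order all_algebra.
From mathcomp Require Import complex.
From mathcomp Require Import all_classical all_reals topology normedtype sequences.
Set Implicit Arguments. Unset Strict Implicit. Unset Printing Implicit Defensive.
Import Order.TTheory GRing.Theory Num.Theory.
Import numFieldNormedType.Exports.
Local Open Scope ring_scope.
Local Open Scope classical_set_scope.

(* The Hilbert space H is C^n (column vectors) with the standard inner product. *)
Definition adjmx (R : rcfType) (n : nat) (M : 'M[R[i]]_n) : 'M[R[i]]_n :=
  map_mx Num.conj (M^T).

Definition hnorm2 (R : rcfType) (n : nat) (v : 'cV[R[i]]_n) : R :=
  \sum_(k < n) ((complex.Re (v k ord0)) ^+ 2 + (complex.Im (v k ord0)) ^+ 2).

Definition hnorm (R : rcfType) (n : nat) (v : 'cV[R[i]]_n) : R :=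
  Num.sqrt (hnorm2 v).

Definition Pmodule (R : rcfType) (n : nat) (A B : 'M[R[i]]_n) : Prop :=
  adjmx A *m A + adjmx B *m B = 1%:M.

Definition Xop (R : rcfType) (n : nat) (A B : 'M[R[i]]_n) (b : bool) : 'M[R[i]]_n :=
  if b then B else A.

(* w xi = X_{x_m} ... X_{x_1} xi  for w = x_1 ... x_m *)
Definition word_act (R : rcfType) (n : nat) (A B : 'M[R[i]]_n)
  (w : seq bool) (xi : 'cV[R[i]]_n) : 'cV[R[i]]_n :=
  foldl (fun v b => Xop A B b *m v) xi w.

(* a ray p = x_1 x_2 ... is a function nat -> bool (x_{k+1} = p k);
   prefix p m = x_1 ... x_m *)
Definition prefix (p : nat -> bool) (m : nat) : seq bool := mkseq p m.

Definition contained_in (R : rcfType) (n : nat) (A B : 'M[R[i]]_n)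
  (p : nat -> bool) (xi : 'cV[R[i]]_n) : Prop :=
  xi != 0 /\ forall m : nat, hnorm (word_act A B (prefix p m) xi) = hnorm xi.

Definition annihilated_by_all_rays (R : realType) (n : nat) (A B : 'M[R[i]]_n)
  (xi : 'cV[R[i]]_n) : Prop :=
  forall q : nat -> bool,
    (fun m : nat => hnorm (word_act A B (prefix q m) xi)) @ \oo --> (0 : R).

Definition periodic_ray (p : nat -> bool) : Prop :=
  exists w : seq bool, w != [::] /\ forall k : nat, p k = nth false w (k %% size w).

From Pilot Require Import Defs.
From HB Require Import structures.
From mathcomp Require Import all_boot all_order all_algebra.
From mathcomp Require Import complex.
From mathcomp Require Import all_classical all_reals topology normedtype sequences.
From mathcomp Require Import derive ring zify.
Set Implicit Arguments. Unset Strict Implicit. Unset Printing Implicit Defensive.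
Import Order.TTheory GRing.Theory Num.Theory.
Import numFieldNormedType.Exports.
Local Open Scope classical_set_scope.
Local Open Scope complex_scope.
Local Open Scope ring_scope.

(* For a word w, the vectors on which w acts isometrically form a subspace
   S(w), and S(u ++ z) is contained in S(u).  The largest dimension r(N) of
   S(w) over the words of length N is nonincreasing in N, hence constant for
   N >= N0.
   If r(N0) = 0, every word of length N0 + 1 is a strict contraction; by
   compactness of the unit sphere all of them contract by a common factor
   rho < 1, so along any ray the norms decay like rho^(m / (N0 + 1)).
   If r(N0) > 0, pick a word w of length 2^N0 + N0 with dim S(w) = r(N0).
   Two of its windows of length N0 coincide, say at t1 < t2.  By maximality,
   the prefix of length t maps S(w) injectively onto S(window at t), so the
   factor z of w between t1 and t2 maps this common space isometrically into
   itself, and each of its non-zero vectors is contained in the ray z z z ... *)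

Section HilbertNorm.
Variables (R : rcfType) (n : nat).
Implicit Types (v : 'cV[R[i]]_n).

Lemma hnorm2_ge0 v : 0 <= hnorm2 v.
Proof. by apply: sumr_ge0 => k _; rewrite addr_ge0 ?sqr_ge0. Qed.

Lemma hnorm2_eq0 v : (hnorm2 v == 0) = (v == 0).
Proof.
apply/idP/eqP => [|->]; last by rewrite /hnorm2 big1 // => k _; rewrite mxE /= expr0n addr0.
rewrite psumr_eq0 => [/allP v0|k _]; last by rewrite addr_ge0 ?sqr_ge0.
apply/matrixP => k j; rewrite (ord1 j) mxE.
have := v0 k (mem_index_enum k).
rewrite /= paddr_eq0 ?sqr_ge0 // !sqrf_eq0 => /andP[/eqP re0 /eqP im0].
by move: (v k 0) re0 im0 => [a b] /= -> ->.
Qed.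

Lemma hnorm2_0 : hnorm2 (0 : 'cV[R[i]]_n) = 0.
Proof. by apply/eqP; rewrite hnorm2_eq0. Qed.

Lemma hnorm2_gt0 v : (0 < hnorm2 v) = (v != 0).
Proof. by rewrite lt_def hnorm2_eq0 hnorm2_ge0 andbT. Qed.

Lemma hnorm2_scale (a : R) v : hnorm2 (a%:C *: v) = a ^+ 2 * hnorm2 v.
Proof.
rewrite /hnorm2 mulr_sumr; apply: eq_bigr => k _; rewrite mxE.
by case: (v k 0) => x y; simpc; rewrite /=; ring.
Qed.

Lemma hnorm2E v : (hnorm2 v)%:C = (map_mx Num.conj v^T *m v) 0 0.
Proof.
rewrite /hnorm2 mxE rmorph_sum; apply: eq_bigr => k _; rewrite !mxE.
by case: (v k 0) => a b; rewrite /GRing.mul /=; congr (_ +i* _); ring.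
Qed.

Lemma hnorm2_mul_adj (M : 'M[R[i]]_n) v :
  (hnorm2 (M *m v))%:C = (map_mx Num.conj v^T *m (adjmx M *m M) *m v) 0 0.
Proof. by rewrite hnorm2E trmx_mul map_mxM !mulmxA. Qed.

End HilbertNorm.

Lemma prefixD (p : nat -> bool) a b :
  Defs.prefix p (a + b) = Defs.prefix p a ++ Defs.prefix (fun k => p (a + k)%N) b.
Proof. by rewrite /Defs.prefix /mkseq iotaD map_cat add0n -{2}[a]addn0 iotaDl -map_comp. Qed.

Lemma prefix_periodic (z : seq bool) m :
  Defs.prefix (fun k => nth false z (k %% size z)) (m * size z) = flatten (nseq m z).
Proof.
elim: m => [|m IHm] //=; rewrite mulSn prefixD -IHm; congr (_ ++ _).
  rewrite -[in RHS](mkseq_nth false z) /Defs.prefix /mkseq; apply/eq_in_map => k.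
  by rewrite mem_iota => /andP[_ lt_k]; rewrite modn_small.
by apply: eq_mkseq => k; rewrite modnDl.
Qed.

Lemma windows_collide (T : finType) (w : seq T) N :
  (#|T| ^ N + N <= size w)%N ->
  exists t1 t2, [/\ (t1 < t2)%N, (t2 <= #|T| ^ N)%N & take N (drop t1 w) = take N (drop t2 w)].
Proof.
move=> size_w; set K := (#|T| ^ N)%N.
have size_window (t : 'I_K.+1) : size (take N (drop t w)) == N.
  by rewrite size_takel // size_drop; have := ltn_ord t; lia.
have : ~~ injectiveb (fun t => Tuple (size_window t)).
  by apply/injectiveP => /leq_card; rewrite card_ord card_tuple -/K ltnn.
case/injectivePn => t1 [t2 neq12 /(congr1 val) /= eq12].
have [lt12 | gt12 | /val_inj eq12'] := ltngtP t1 t2; last by rewrite eq12' eqxx in neq12.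
  by exists t1, t2; split; rewrite // -ltnS ltn_ord.
by exists t2, t1; split; rewrite // -ltnS ltn_ord.
Qed.

Section Words.
Variables (R : rcfType) (n : nat) (A B : 'M[R[i]]_n).
Hypothesis AB : Pmodule A B.
Implicit Types (u v : 'cV[R[i]]_n) (w z : seq bool).

Definition word_mx w : 'M[R[i]]_n := foldl (fun M b => Xop A B b *m M) 1%:M w.

Lemma word_mx_foldl p w (M : 'M[R[i]]_(n, p)) :
  foldl (fun N b => Xop A B b *m N) M w = word_mx w *m M.
Proof.
rewrite /word_mx; elim: w p M => [|b w IHw] p M /=; first by rewrite mul1mx.
by rewrite IHw [in RHS]IHw mulmx1 mulmxA.
Qed.

Lemma word_mx_cat w z : word_mx (w ++ z) = word_mx z *m word_mx w.
Proof. by rewrite {1}/word_mx foldl_cat word_mx_foldl. Qed.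

Lemma word_mx1 b : word_mx [:: b] = Xop A B b.
Proof. by rewrite /word_mx /= mulmx1. Qed.

Lemma word_actE w v : word_act A B w v = word_mx w *m v.
Proof. by rewrite /word_act word_mx_foldl. Qed.

Lemma hnorm2_Xop_split b v :
  hnorm2 (Xop A B b *m v) + hnorm2 (Xop A B (~~ b) *m v) = hnorm2 v.
Proof.
wlog -> : b / b = false by case: b => [/(_ false erefl)|]; [rewrite addrC|]; apply.
apply: (@complexI R); rewrite rmorphD /= !hnorm2_mul_adj [RHS]hnorm2E.
by rewrite -[X in _ = (_ *m X) _ _]mul1mx -AB mulmxDl mulmxDr !mulmxA [RHS]mxE.
Qed.

Lemma hnorm2_word_mx_le w v : hnorm2 (word_mx w *m v) <= hnorm2 v.
Proof.
elim/last_ind: w v => [|w b IHw] v; first by rewrite mul1mx.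
rewrite -cats1 word_mx_cat word_mx1 -mulmxA; apply: le_trans _ (IHw v).
by rewrite -(hnorm2_Xop_split b (word_mx w *m v)) lerDl hnorm2_ge0.
Qed.

Definition isometric w v := hnorm2 (word_mx w *m v) = hnorm2 v.

Lemma isometric_cat w z v :
  isometric (w ++ z) v <-> isometric w v /\ isometric z (word_mx w *m v).
Proof.
rewrite /isometric word_mx_cat -mulmxA.
have le_z := hnorm2_word_mx_le z (word_mx w *m v).
have le_w := hnorm2_word_mx_le w v.
split=> [eq_wz | [eq_w eq_z]]; last by rewrite eq_z.
have eq_w : hnorm2 (word_mx w *m v) = hnorm2 v.
  by apply/eqP; rewrite eq_le le_w -eq_wz le_z.
by rewrite eq_w.
Qed.

Lemma isometric1 b v : isometric [:: b] v <-> Xop A B (~~ b) *m v = 0.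
Proof.
rewrite /isometric word_mx1 -[RHS](hnorm2_Xop_split b v).
split=> [eqX | ->]; last by rewrite hnorm2_0 addr0.
apply/eqP; rewrite -hnorm2_eq0; apply/eqP.
by apply: (@addrI _ (hnorm2 (Xop A B b *m v))); rewrite addr0 -eqX.
Qed.

Lemma isometric_cons b z v :
  isometric (b :: z) v <-> Xop A B (~~ b) *m v = 0 /\ isometric z (Xop A B b *m v).
Proof. by rewrite -cat1s isometric_cat isometric1 word_mx1. Qed.

(* Row-space encoding of the vectors on which [w] is isometric (see
   [sub_isom_space]); the recursion follows [isometric_cons]. *)
Fixpoint isom_space w : 'M[R[i]]_n :=
  if w is b :: z then
    (kermx (Xop A B (~~ b))^T :&: kermx ((Xop A B b)^T *m cokermx (isom_space z)))%MS
  else 1%:M.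

Lemma sub_isom_space w (u : 'rV[R[i]]_n) :
  (u <= isom_space w)%MS <-> isometric w u^T.
Proof.
elim: w u => [|b w IHw] u /=.
  by rewrite submx1 /isometric mul1mx.
have trE M : u *m M^T = (M *m u^T)^T by rewrite trmx_mul trmxK.
rewrite isometric_cons; have := IHw (u *m (Xop A B b)^T); rewrite trmx_mul trmxK => <-.
rewrite sub_capmx !sub_kermx mulmxA -submxE [X in X == 0]trE trmx_eq0.
by split=> [/andP[/eqP kill sub] | [kill sub]]; [split | rewrite kill eqxx].
Qed.

Lemma isom_space_catl w z : (isom_space (w ++ z) <= isom_space w)%MS.
Proof.
apply/row_subP => k; apply/sub_isom_space.
by have /sub_isom_space/isometric_cat[] := row_sub k (isom_space (w ++ z)).
Qed.

Lemma isom_space_cat_mul w z :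
  (isom_space (w ++ z) *m (word_mx w)^T <= isom_space z)%MS.
Proof.
apply/row_subP => k; rewrite row_mul; apply/sub_isom_space.
have /sub_isom_space/isometric_cat[_] := row_sub k (isom_space (w ++ z)).
by rewrite trmx_mul trmxK.
Qed.

Lemma mxrank_mul_word_mx m w (M : 'M[R[i]]_(m, n)) :
  (M <= isom_space w)%MS -> \rank (M *m (word_mx w)^T) = \rank M.
Proof.
move=> sub_M; rewrite -[RHS](mxrank_mul_ker M (word_mx w)^T).
suff /eqP -> : (M :&: kermx (word_mx w)^T)%MS == 0 by rewrite mxrank0 addn0.
rewrite -submx0; apply/row_subP => k; set u := row k _.
have u_sub : (u <= M :&: kermx (word_mx w)^T)%MS := row_sub k _.
have /sub_isom_space : (u <= isom_space w)%MS.
  exact: submx_trans u_sub (submx_trans (capmxSl _ _) sub_M).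
have /sub_kermxP ker_u := submx_trans u_sub (capmxSr _ _).
rewrite /isometric -[word_mx w]trmxK -trmx_mul ker_u trmx0 hnorm2_0.
by move/esym/eqP; rewrite hnorm2_eq0 trmx_eq0 submx0.
Qed.

Definition max_isom_rank N := (\max_(t : N.-tuple bool) \rank (isom_space t))%N.

Lemma rank_isom_space_le w : (\rank (isom_space w) <= max_isom_rank (size w))%N.
Proof. exact: (leq_bigmax (in_tuple w)). Qed.

Lemma max_isom_rank_attained N :
  exists2 w, size w = N & \rank (isom_space w) = max_isom_rank N.
Proof.
have card_gt0 : (0 < #|{: N.-tuple bool}|)%N by rewrite card_tuple card_bool expn_gt0.
have [t max_t] := bigop.eq_bigmax (fun t : N.-tuple bool => \rank (isom_space t)) card_gt0.
by exists t; rewrite ?size_tuple // /max_isom_rank max_t.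
Qed.

Lemma max_isom_rank_nonincr : {homo max_isom_rank : N M /~ (N <= M)%N}.
Proof.
move=> N M leMN; have [w size_w <-] := max_isom_rank_attained N.
have size_take : size (take M w) = M by rewrite size_takel // size_w.
rewrite -size_take; apply: (leq_trans _ (rank_isom_space_le _)).
by apply: mxrankS; rewrite -{1}(cat_take_drop M w) isom_space_catl.
Qed.

Lemma word_mx_contraction_strict w v :
  max_isom_rank (size w) = 0%N -> v != 0 -> hnorm2 (word_mx w *m v) < hnorm2 v.
Proof.
move=> rank0 v0; rewrite lt_neqAle hnorm2_word_mx_le andbT; apply: contra v0 => /eqP iso_v.
have : (v^T <= isom_space w)%MS by apply/sub_isom_space; rewrite trmxK.
have /eqP -> : isom_space w == 0 by rewrite -mxrank_eq0 -leqn0 -rank0 rank_isom_space_le.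
by rewrite submx0 trmx_eq0.
Qed.

Lemma isom_space_window w t N :
  (t + N <= size w)%N -> \rank (isom_space w) = max_isom_rank N ->
  (isom_space w *m (word_mx (take t w))^T == isom_space (take N (drop t w)))%MS.
Proof.
move=> size_w rank_w; set Q := take N (drop t w).
have size_Q : size Q = N by rewrite size_takel // size_drop; lia.
have sub_Q : (isom_space w *m (word_mx (take t w))^T <= isom_space Q)%MS.
  apply: submx_trans (isom_space_cat_mul _ _); apply: submxMr.
  by rewrite -{1}(cat_take_drop t w) -{1}(cat_take_drop N (drop t w)) catA isom_space_catl.
rewrite sub_Q -(mxrank_leqif_sup sub_Q).2 eqn_leq mxrankS //=.
rewrite mxrank_mul_word_mx ?rank_w -?size_Q ?rank_isom_space_le //.
by rewrite -{1}(cat_take_drop t w) isom_space_catl.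
Qed.

Lemma periodic_ray_of_invariant_space (V : 'M[R[i]]_n) z :
  z != [::] -> V != 0 -> (V <= isom_space z)%MS -> stablemx V (word_mx z)^T ->
  exists p xi, periodic_ray p /\ contained_in A B p xi.
Proof.
move=> z0 V0 iso_V inv_V.
have iso_pow m (u : 'rV[R[i]]_n) : (u <= V)%MS -> isometric (flatten (nseq m z)) u^T.
  elim: m u => [|m IHm] u u_V /=; first by rewrite /isometric mul1mx.
  apply/isometric_cat; split; first exact/sub_isom_space/(submx_trans u_V).
  have -> : word_mx z *m u^T = (u *m (word_mx z)^T)^T by rewrite trmx_mul trmxK.
  by apply: IHm; apply: submx_trans inv_V; apply: submxMr.
exists (fun k => nth false z (k %% size z)), (nz_row V)^T; split; first by exists z.
split=> [|m]; first by rewrite trmx_eq0 nz_row_eq0.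
rewrite /hnorm word_actE; congr Num.sqrt.
have := iso_pow m _ (nz_row_sub V); rewrite -prefix_periodic.
have -> : (m * size z = m + (m * size z - m))%N.
  by rewrite subnKC // leq_pmulr // lt0n size_eq0.
by rewrite prefixD => /isometric_cat[].
Qed.

Lemma periodic_ray_of_stable_rank N :
  (0 < max_isom_rank N)%N ->
  (forall M, (N <= M)%N -> max_isom_rank M = max_isom_rank N) ->
  exists p xi, periodic_ray p /\ contained_in A B p xi.
Proof.
move=> rank_gt0 stable.
have [w size_w rank_w] := max_isom_rank_attained (2 ^ N + N).
rewrite stable ?leq_addl // in rank_w.
have [t1 [t2 [lt12 le2 window12]]] : exists t1 t2, [/\ (t1 < t2)%N, (t2 <= 2 ^ N)%N
    & take N (drop t1 w) = take N (drop t2 w)].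
  by rewrite -card_bool; apply: windows_collide; rewrite card_bool size_w.
set z := drop t1 (take t2 w).
have take2 : take t2 w = take t1 w ++ z.
  by rewrite -{1}(cat_take_drop t1 (take t2 w)) take_takel // ltnW.
have sub_take t : (isom_space w <= isom_space (take t w))%MS.
  by rewrite -{1}(cat_take_drop t w) isom_space_catl.
have fit1 : (t1 + N <= size w)%N by rewrite size_w; lia.
have fit2 : (t2 + N <= size w)%N by rewrite size_w; lia.
have /andP[_ window1_sub] := isom_space_window fit1 rank_w.
have /andP[window2_sub _] := isom_space_window fit2 rank_w.
apply: (periodic_ray_of_invariant_space (z := z)
  (V := isom_space w *m (word_mx (take t1 w))^T)).
- by rewrite -size_eq0 size_drop size_takel ?size_w; lia.
- by rewrite -mxrank_eq0 mxrank_mul_word_mx ?sub_take // rank_w -lt0n.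
- by apply: submx_trans (isom_space_cat_mul (take t1 w) z); rewrite -take2 submxMr ?sub_take.
- rewrite -mulmxA -trmx_mul -word_mx_cat -take2.
  by apply: submx_trans window2_sub _; rewrite -window12.
Qed.

End Words.

Lemma nonincreasing_nat_stable (f : nat -> nat) :
  {homo f : m n /~ (m <= n)%N} -> exists N, forall M, (N <= M)%N -> f M = f N.
Proof.
move=> f_nonincr.
have f_val : exists k, `[< exists N, f N = k >] by exists (f 0); apply/asboolP; exists 0.
case: (ex_minnP f_val) => k /asboolP[N <-] f_min; exists N => M le_NM.
by apply/eqP; rewrite eqn_leq f_nonincr //= f_min //; apply/asboolP; exists M.
Qed.

Section Compactness.
Variables (R : realType) (n : nat).
Implicit Types (x : 'rV[R]_(n + n)) (v : 'cV[R[i]]_n).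

(* C^n is identified with R^(n + n) to use the compactness of closed bounded
   sets of real row vectors. *)
Definition cvec_of x : 'cV[R[i]]_n := \col_k (x 0 (lshift n k) +i* x 0 (rshift n k)).

Definition rvec_of v : 'rV[R]_(n + n) :=
  row_mx (\row_k complex.Re (v k 0)) (\row_k complex.Im (v k 0)).

Lemma rvec_ofK : cancel rvec_of cvec_of.
Proof.
move=> v; apply/matrixP => k j; rewrite (ord1 j) [LHS]mxE row_mxEl row_mxEr !mxE.
by case: (v k 0).
Qed.

Lemma hnorm2_cvec_of x : hnorm2 (cvec_of x) = \sum_(j < n + n) x 0 j ^+ 2.
Proof.
by rewrite big_split_ord /= -big_split; apply: eq_bigr => k _; rewrite mxE.
Qed.

Lemma continuous_hnorm2_mul (W : 'M[R[i]]_n) :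
  continuous (fun x => hnorm2 (W *m cvec_of x)).
Proof.
have cst (c : R) : continuous (fun _ : 'rV[R]_(n + n) => c) by exact: cst_continuous.
have coord j : continuous (fun x : 'rV[R]_(n + n) => x 0 j) by exact: coord_continuous.
have contD (f g : 'rV[R]_(n + n) -> R) :
    continuous f -> continuous g -> continuous (fun x => f x + g x).
  by move=> cf cg x; exact: (continuousD (cf x) (cg x)).
have contM (f g : 'rV[R]_(n + n) -> R) :
    continuous f -> continuous g -> continuous (fun x => f x * g x).
  by move=> cf cg x; exact: (continuousM (cf x) (cg x)).
have cont_sum (F : 'I_n -> 'rV[R]_(n + n) -> R) :
    (forall k, continuous (F k)) -> continuous (fun x => \sum_k F k x).
  move=> cF; elim: (index_enum _) => [|k s IHs].
    by under eq_fun do rewrite big_nil; exact: cst.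
  by under eq_fun do rewrite big_cons; apply: contD.
have cont_lin (a b : R) j1 j2 : continuous (fun x => a * x 0 j1 + b * x 0 j2).
  by apply: contD; apply: contM.
have Re_sum (F : 'I_n -> R[i]) : complex.Re (\sum_j F j) = \sum_j complex.Re (F j).
  by apply: (big_morph (@complex.Re R)) => // -[a b] [c d].
have Im_sum (F : 'I_n -> R[i]) : complex.Im (\sum_j F j) = \sum_j complex.Im (F j).
  by apply: (big_morph (@complex.Im R)) => // -[a b] [c d].
have ReE k : (fun x => complex.Re ((W *m cvec_of x) k 0)) = fun x =>
    \sum_j (complex.Re (W k j) * x 0 (lshift n j)
             + - complex.Im (W k j) * x 0 (rshift n j)).
  apply/funext => x; rewrite mxE Re_sum; apply: eq_bigr => j _.
  by rewrite mxE; case: (W k j) => a b; rewrite mulNr.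
have ImE k : (fun x => complex.Im ((W *m cvec_of x) k 0)) = fun x =>
    \sum_j (complex.Re (W k j) * x 0 (rshift n j)
             + complex.Im (W k j) * x 0 (lshift n j)).
  apply/funext => x; rewrite mxE Im_sum; apply: eq_bigr => j _.
  by rewrite mxE; case: (W k j) => a b; rewrite /= addrC.
rewrite /hnorm2; apply: (cont_sum) => k; under eq_fun do rewrite !expr2.
by apply: (contD); apply: (contM); rewrite ?ReE ?ImE; apply: (cont_sum) => j; apply: cont_lin.
Qed.

Lemma compact_unit_sphere : compact [set x | hnorm2 (cvec_of x) = 1].
Proof.
apply: bounded_closed_compact.
  apply: filterS (nbhs_pinfty_ge (num_real (1 : R))) => M le1M x /= norm1.
  apply: le_trans le1M; rewrite [`|x|]mx_normrE; apply: bigmax_le => // -[i j] _ /=.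
  rewrite (ord1 i) -(expr_le1 (_ : (0 < 2)%N)) // real_normK ?num_real // -norm1.
  by rewrite hnorm2_cvec_of (bigD1 j) //= lerDl sumr_ge0 // => k _; rewrite sqr_ge0.
rewrite -[X in closed X]/((fun x => hnorm2 (cvec_of x)) @^-1` [set y | y = 1]).
apply: preimage_closed; last exact: closed_eq.
move=> x _; have := continuous_hnorm2_mul (W := 1); under eq_fun do rewrite mul1mx; exact.
Qed.

Lemma uniform_contraction (W : 'M[R[i]]_n) :
  (forall v, v != 0 -> hnorm2 (W *m v) < hnorm2 v) ->
  exists rho, [/\ 0 <= rho, rho < 1 & forall v, hnorm2 (W *m v) <= rho * hnorm2 v].
Proof.
move=> W_contr.
have [[v0 v0_neq0] | all0] := pselect (exists v : 'cV[R[i]]_n, v != 0); last first.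
  exists 0; split=> // v; have [-> | v_neq0] := eqVneq v 0.
    by rewrite mulmx0 hnorm2_0 mul0r.
  by case: all0; exists v.
pose normalize v := rvec_of ((Num.sqrt (hnorm2 v))^-1%:C *: v).
have normalizeE v (M : 'M[R[i]]_n) :
    hnorm2 (M *m cvec_of (normalize v)) = hnorm2 (M *m v) / hnorm2 v.
  by rewrite rvec_ofK -scalemxAr hnorm2_scale exprVn sqr_sqrtr ?hnorm2_ge0 // mulrC.
have sphere_normalize v : v != 0 -> hnorm2 (cvec_of (normalize v)) = 1.
  by move=> v_neq0; rewrite -[cvec_of _]mul1mx normalizeE mul1mx divff // hnorm2_eq0.
have sphere0 : [set x | hnorm2 (cvec_of x) = 1] !=set0.
  by exists (normalize v0); exact: sphere_normalize.
have [c /set_mem /= c1 c_max] := compact_EVT_max sphere0 compact_unit_sphere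
  (continuous_subspaceT (continuous_hnorm2_mul (W := W))).
exists (hnorm2 (W *m cvec_of c)); split; first exact: hnorm2_ge0.
  by rewrite -c1; apply: W_contr; rewrite -hnorm2_eq0 c1 oner_eq0.
move=> v; have [-> | v_neq0] := eqVneq v 0; first by rewrite mulmx0 hnorm2_0 mulr0.
rewrite -ler_pdivrMr ?hnorm2_gt0 // -normalizeE.
by apply: c_max; apply/mem_set/sphere_normalize.
Qed.

Lemma uniform_contraction_seq (Ws : seq 'M[R[i]]_n) :
  (forall W, W \in Ws -> forall v, v != 0 -> hnorm2 (W *m v) < hnorm2 v) ->
  exists rho, [/\ 0 <= rho, rho < 1 &
    forall W, W \in Ws -> forall v, hnorm2 (W *m v) <= rho * hnorm2 v].
Proof.
elim: Ws => [|W Ws IHWs] Ws_contr; first by exists 0; split=> // W; rewrite in_nil.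
have [rho1 [rho1_ge0 rho1_lt1 W_le]] := uniform_contraction (Ws_contr W (mem_head _ _)).
have [|rho2 [rho2_ge0 rho2_lt1 Ws_le]] := IHWs.
  by move=> W' W'_in; apply: Ws_contr; rewrite inE W'_in orbT.
exists (Num.max rho1 rho2); split; rewrite ?le_max ?rho1_ge0 ?gt_max ?rho1_lt1 ?rho2_lt1 //.
move=> W'; rewrite inE => /predU1P[-> | W'_in] v.
  by apply: le_trans (W_le v) _; rewrite ler_wpM2r ?hnorm2_ge0 ?le_max ?lexx.
by apply: le_trans (Ws_le _ W'_in v) _; rewrite ler_wpM2r ?hnorm2_ge0 ?le_max ?lexx ?orbT.
Qed.

End Compactness.

Section Annihilation.
Variables (R : realType) (n : nat) (A B : 'M[R[i]]_n).
Hypothesis AB : Pmodule A B.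

Lemma hnorm2_prefix_decay (q : nat -> bool) N rho v :
  0 <= rho ->
  (forall w, size w = N -> forall u, hnorm2 (word_mx A B w *m u) <= rho * hnorm2 u) ->
  forall m, hnorm2 (word_mx A B (Defs.prefix q m) *m v) <= rho ^+ (m %/ N) * hnorm2 v.
Proof.
move=> rho_ge0 contr_N.
have decay k p u :
    hnorm2 (word_mx A B (Defs.prefix p (k * N)) *m u) <= rho ^+ k * hnorm2 u.
  elim: k p u => [|k IHk] p u; first by rewrite mul1mx expr0 mul1r.
  rewrite mulSn prefixD word_mx_cat -mulmxA; apply: le_trans (IHk _ _) _.
  by rewrite exprSr -mulrA ler_wpM2l ?exprn_ge0 // contr_N // size_mkseq.
move=> m; rewrite {1}(divn_eq m N) prefixD word_mx_cat -mulmxA.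
exact: le_trans (hnorm2_word_mx_le AB _ _) (decay _ _ _).
Qed.

Lemma hnorm_prefix_cvg0 (q : nat -> bool) N rho xi :
  (0 < N)%N -> 0 <= rho -> rho < 1 ->
  (forall w, size w = N -> forall u, hnorm2 (word_mx A B w *m u) <= rho * hnorm2 u) ->
  (fun m => hnorm (word_act A B (Defs.prefix q m) xi)) @ \oo --> (0 : R).
Proof.
move=> N_gt0 rho_ge0 rho_lt1 contr_N; apply/cvgrPdist_lt => e e_gt0.
have rhoC : (fun k => rho ^+ k * hnorm2 xi) @ \oo --> (0 : R).
  rewrite -(mul0r (hnorm2 xi)); apply: cvgM; last exact: cvg_cst.
  by apply: cvg_expr; rewrite ger0_norm.
have /cvgrPdist_lt /(_ (e ^+ 2) (exprn_gt0 2 e_gt0)) [k _ small_k] := rhoC.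
exists (k * N)%N => // m /= le_m.
rewrite sub0r normrN ger0_norm ?sqrtr_ge0 // /hnorm word_actE.
rewrite -(ger0_norm (ltW e_gt0)) -sqrtr_sqr ltr_sqrt ?exprn_gt0 //.
apply: le_lt_trans (hnorm2_prefix_decay q xi rho_ge0 contr_N m) _.
have := small_k k (leqnn k).
rewrite /= sub0r normrN ger0_norm ?mulr_ge0 ?exprn_ge0 ?hnorm2_ge0 //.
apply: le_lt_trans; rewrite ler_wpM2r ?hnorm2_ge0 // ler_wiXn2l ?rho_ge0 ?ltW //.
by rewrite leq_divRL.
Qed.

Lemma annihilated_of_max_isom_rank0 N :
  max_isom_rank A B N = 0%N -> forall xi, annihilated_by_all_rays A B xi.
Proof.
move=> rank0 xi q; have rank0' : max_isom_rank A B N.+1 = 0%N.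
  by apply/eqP; rewrite -leqn0 -rank0 max_isom_rank_nonincr.
pose Ws := [seq word_mx A B (val t) | t <- enum {: N.+1.-tuple bool}].
have [|rho [rho_ge0 rho_lt1 contr_Ws]] := uniform_contraction_seq (Ws := Ws).
  move=> _ /mapP[t _ ->] v v_neq0; apply: word_mx_contraction_strict => //.
  by rewrite size_tuple.
apply: (hnorm_prefix_cvg0 q xi (ltn0Sn N) rho_ge0 rho_lt1) => w size_w u.
apply: contr_Ws; apply/mapP; exists (Tuple (introT eqP size_w)) => //.
by rewrite mem_enum.
Qed.

End Annihilation.

Theorem proposition2p10 (R : realType) (n : nat) (A B : 'M[R[i]]_n) :
  Pmodule A B ->
  (forall xi : 'cV[R[i]]_n, xi != 0 -> annihilated_by_all_rays A B xi) \/
  (exists (p : nat -> bool) (xi : 'cV[R[i]]_n),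
      periodic_ray p /\ contained_in A B p xi).
Proof.
move=> AB; have [N stable] := nonincreasing_nat_stable (max_isom_rank_nonincr AB).
have [rank0 | rank_gt0] := posnP (max_isom_rank A B N).
  by left => xi _; exact: (annihilated_of_max_isom_rank0 AB rank0 xi).
by right; exact: (periodic_ray_of_stable_rank AB rank_gt0 stable).
Qed.
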